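(* Let $S$ be a semigroup of transformations of a finite set $\Omega$ with $|\Omega|=n$, and suppose $S$ contains a permutation group $G$ that is primitive on $\Omega$. Suppose the minimum rank of an element of $S$ is $r$, where $r>1$. Then there is no element of $S$ of rank greater than $r$ whose kernel partition has $r-1$ parts of size $n/r$.
   Context: The rank of a transformation $h$ is $|\Omega h|$; its kernel partition is the partition of $\Omega$ into the inverse images of the points of its image. A permutation group is primitive if it is transitive and preserves no equivalence relation other than equality and the universal relation. *)

From mathcomp Require Import all_boot all_fingroup primitive_action.
Set Implicit Arguments. Unset Strict Implicit. Unset Printing Implicit Defensive.

Definition trank (T : finType) (h : {ffun T -> T}) : nat := #|[set h x | x in T]|.

Definition is_semigroup (T : finType) (S : {set {ffun T -> T}}) : Prop :=
  forall f g, f \in S -> g \in S -> [ffun x => g (f x)] \in S.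

Definition kernel_class (T : finType) (h : {ffun T -> T}) (y : T) : {set T} :=
  [set x | h x == y].

(* number of parts of the kernel partition of h of size n/r, where n = |T|
   (a part of size k has size n/r iff r * k = n) *)
Definition nparts_size_n_over_r (T : finType) (h : {ffun T -> T}) (r : nat) : nat :=
  #|[set y in [set h x | x in T] | r * #|kernel_class h y| == #|T|]|.

From mathcomp Require Import all_boot all_fingroup gseries primitive_action.
Set Implicit Arguments. Unset Strict Implicit. Unset Printing Implicit Defensive.

(* Let f in S have the minimal rank r, with image A, and let U be the union of
   the r - 1 kernel classes of h of size n/r. Minimality makes every element
   k o f of S injective on A, so h is injective on each translate gA (g in G)
   and gA meets U in at most r - 1 points. Counting over the transitive group
   G shows that gA meets U in r - 1 points on average, hence for every g; then
   h maps gA onto the r - 1 classes in U plus one more point, so for k in G the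
   r-set f k h g A is f k (h U) plus a single point independent of g. Taking
   a0 in A \ U and w outside U with h w <> h a0 (possible since rank h > r),
   the maps f k with k in G all identify h a0 and h w. That G-invariant
   equivalence is then universal by primitivity, contradicting rank f > 1. *)

Section PrimitiveKernel.

Variables (T : finType) (G : {group {perm T}}) (eT : eqType) (F : T -> eT).
Hypothesis primG : [primitive G, on [set: T] | 'P].
Hypothesis F_inv : forall a x y, a \in G -> F x = F y -> F (a x) = F (a y).

Let trG : [transitive G, on [set: T] | 'P]. Proof. by case/andP: primG. Qed.

Let F_invE a x y : a \in G -> (F (a x) == F (a y)) = (F x == F y).
Proof.
move=> Ga; apply/eqP/eqP; last exact: F_inv.
by move/(F_inv (groupVr Ga)); rewrite !permK.
Qed.

(* The setwise stabiliser N of the F-class of x lies between 'C_G[x] and G.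
   A g sending x to y rules out N = 'C_G[x], and a g sending x out of its
   class rules out N = G. *)
Lemma prim_kernel_trivial x y : x != y -> F x = F y -> forall u v, F u = F v.
Proof.
move=> neq_xy Fxy u v; apply/eqP; apply: contraT => neq_Fuv.
pose N := ('N_G([set t | F t == F x] | 'P))%G.
have N_E a : a \in G -> (a \in N) = (F (a x) == F x).
  move=> Ga; rewrite inE Ga /=; apply/astabsP/idP => [Na | Fax t].
    by have := Na x; rewrite !inE eqxx /= => ->.
  by rewrite !inE /= -[aperm t a]/(a t) -{1}(eqP Fax) F_invE.
have /maximal_eqP[_ maxC] : maximal_eq 'C_G[x | 'P] G.
  by rewrite -(trans_prim_astab (in_setT x) trG).
have [||/= NC|/= NG] := maxC N.
- apply/subsetP => b /setIP[Gb /astab1P bx].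
  by rewrite N_E // -[b x]/(aperm x b) bx.
- exact: subsetIl.
- have [g Gg gxy] := atransP2 trG (in_setT x) (in_setT y).
  have /setIP[_ /astab1P gx] : g \in ('C_G[x | 'P])%g.
    by rewrite -NC N_E // -[g x]/(aperm x g) -gxy Fxy.
  by move: neq_xy; rewrite gxy gx eqxx.
- have [w Fw] : exists w, F w != F x.
    have [Fux|] := eqVneq (F u) (F x); last by exists u.
    by exists v; rewrite -Fux eq_sym.
  have [g Gg gxw] := atransP2 trG (in_setT x) (in_setT w).
  by have := Gg; rewrite -NG N_E // -[g x]/(aperm x g) -gxw (negbTE Fw).
Qed.

End PrimitiveKernel.

Lemma prim_translates_const (T : finType) (G : {group {perm T}}) (eT : eqType)
    (f : T -> eT) x y :
    [primitive G, on [set: T] | 'P] -> x != y ->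
    (forall k, k \in G -> f (k x) = f (k y)) ->
  forall u v, f u = f v.
Proof.
move=> primG neq_xy fxy u v.
pose F z := [ffun k : {perm T} => if k \in G then Some (f (k z)) else None].
have /(_ u v) : forall u v, F u = F v.
  apply: prim_kernel_trivial primG _ _ _ neq_xy _ => [a z t Ga /ffunP Fzt|].
    apply/ffunP => k; rewrite !ffunE; case: ifP => // Gk.
    by have := Fzt (a * k)%g; rewrite !ffunE groupM // !permM.
  by apply/ffunP => k; rewrite !ffunE; case: ifP => // Gk; rewrite fxy.
by rewrite /F => /ffunP/(_ 1%g); rewrite !ffunE group1 !perm1 => -[].
Qed.

Lemma min_rank_inj (T : finType) (S : {set {ffun T -> T}}) (f s : {ffun T -> T})
    (k : T -> T) :
    (forall h, h \in S -> trank f <= trank h) -> s \in S ->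
    (forall x, s x = k (f x)) ->
  {in [set f x | x in T] &, injective k}.
Proof.
move=> min_f Ss sE; apply/imset_injP; rewrite eqn_leq leq_imset_card -imset_comp.
by have := min_f _ Ss; rewrite /trank (eq_imset _ sE).
Qed.

Section TransitiveCount.

Variables (T : finType) (G : {group {perm T}}).
Hypothesis trG : [transitive G, on [set: T] | 'P].

Lemma transitive_card_move a (U : {set T}) :
  #|T| * #|[set g in G | g a \in U]| = #|U| * #|G|.
Proof.
have card_move u : #|[set g in G | g a == u]| = #|('C_G[a | 'P])%g|.
  have [g Gg gau] := atransP2 trG (in_setT a) (in_setT u).
  rewrite -(card_rcoset ('C_G[a | 'P])%g g).
  rewrite -(@amove_act _ _ _ 'P G a (subsetT _) g Gg).
  by apply: eq_card => x; rewrite !inE gau.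
have -> : #|[set g in G | g a \in U]| = \sum_(u in U) #|[set g in G | g a == u]|.
  rewrite -sum1dep_card (partition_big (fun g : {perm T} => g a) (mem U)) /=;
    last by move=> g /andP[].
  apply: eq_bigr => u Uu; rewrite -sum1dep_card; apply: eq_bigl => g.
  by case: eqP => [->|]; rewrite ?Uu ?andbT ?andbF.
rewrite (eq_bigr _ (fun u _ => card_move u)) sum_nat_const mulnCA.
by rewrite -cardsT -(atransP trG a (in_setT a)) card_orbit_stab.
Qed.

Lemma transitive_sum_card_hits (A U : {set T}) :
  #|T| * \sum_(g in G) #|[set a in A | g a \in U]| = #|A| * #|U| * #|G|.
Proof.
rewrite (eq_bigr (fun g : {perm T} => \sum_(a in A) (g a \in U))); last first.
  by move=> g _; rewrite -sum1dep_card big_mkcondr.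
rewrite exchange_big big_distrr /=.
rewrite (eq_bigr (fun _ => #|U| * #|G|)) ?sum_nat_const ?mulnA // => a _.
by rewrite -(transitive_card_move a) -sum1dep_card big_mkcondr.
Qed.

End TransitiveCount.

Lemma card_preim_classes (T rT : finType) (h : T -> rT) (Y : {set rT}) m :
    (forall y, y \in Y -> m * #|[set x | h x == y]| = #|T|) ->
  m * #|[set x | h x \in Y]| = #|Y| * #|T|.
Proof.
move=> classY.
have -> : #|[set x | h x \in Y]| = \sum_(y in Y) #|[set x | h x == y]|.
  rewrite -sum1_card (partition_big h (mem Y)) => [|x]; last by rewrite inE.
  apply: eq_bigr => y Yy; rewrite -sum1_card; apply: eq_bigl => x.
  by rewrite !inE; case: eqP => [->|]; rewrite ?andbT ?andbF.
by rewrite big_distrr -sum_nat_const; apply: eq_bigr.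
Qed.

Section ImageHits.

Variables (T : finType) (G : {group {perm T}}) (f h : T -> T) (Y : {set T}).

Local Notation A := [set f x | x in T].
Local Notation U := [set x | h x \in Y].
Local Notation hits g := [set a in A | g a \in U].

Hypothesis trG : [transitive G, on [set: T] | 'P].
Hypothesis fGhG_inj : forall g k, g \in G -> k \in G ->
  {in A &, injective (fun a => f (k (h (g a))))}.
Hypothesis classY : forall y, y \in Y -> #|A| * #|[set x | h x == y]| = #|T|.

Lemma hG_inj g : g \in G -> {in A &, injective (fun a => h (g a))}.
Proof.
by move=> Gg a b Aa Ab hgab; apply: (fGhG_inj Gg (group1 G)) => //=; rewrite hgab.
Qed.

Lemma card_hits_le g : g \in G -> #|hits g| <= #|Y|.
Proof.
move=> Gg; rewrite -(card_in_imset (f := fun a => h (g a))); last first.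
  by move=> a b /setIdP[Aa _] /setIdP[Ab _]; apply: hG_inj.
apply/subset_leq_card/subsetP => _ /imsetP[a /setIdP[_ gaU] ->].
by rewrite inE in gaU.
Qed.

(* Averaging over the transitive group G: a random translate of A meets U in
   #|A| #|U| / #|T| = #|Y| points, and no translate meets it in more. *)
Lemma card_hits g : g \in G -> #|hits g| = #|Y|.
Proof.
move=> Gg; have [T0 | T_gt0] := posnP #|T|.
  have Y0 : #|Y| = 0 by apply/eqP; rewrite -leqn0 -T0 max_card.
  by apply/eqP; rewrite Y0 -leqn0 -Y0 card_hits_le.
have sum_hits : \sum_(k in G) #|hits k| = \sum_(k in G) #|Y|.
  apply/eqP; rewrite -(eqn_pmul2l T_gt0) transitive_sum_card_hits //.
  by rewrite card_preim_classes // sum_nat_const -mulnA mulnCA [#|Y| * _]mulnC.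
have le_sum := leqif_sum (fun k (Gk : k \in G) => leqif_eq (card_hits_le Gk)).
by move: le_sum.2; rewrite sum_hits eqxx => /esym/forall_inP/(_ g Gg)/eqP.
Qed.

Lemma image_hits g k : g \in G -> k \in G ->
  [set f (k y) | y in Y] = [set f (k (h (g a))) | a in hits g].
Proof.
move=> Gg Gk; have imY : [set h (g a) | a in hits g] = Y.
  apply/eqP; rewrite eqEcard card_in_imset ?card_hits // ?leqnn ?andbT.
    by apply/subsetP => _ /imsetP[a /setIdP[_ gaU] ->]; rewrite inE in gaU.
  by move=> a b /setIdP[Aa _] /setIdP[Ab _]; apply: hG_inj.
by rewrite -[in LHS]imY -imset_comp.
Qed.

Lemma card_translate_Y k : k \in G -> #|[set f (k y) | y in Y]| = #|Y|.
Proof.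
move=> Gk; rewrite (image_hits (group1 G) Gk) card_in_imset ?card_hits //.
by move=> a b /setIdP[Aa _] /setIdP[Ab _]; apply: fGhG_inj.
Qed.

Lemma miss_notin_translate g k a :
    g \in G -> k \in G -> a \in A -> g a \notin U ->
  f (k (h (g a))) \notin [set f (k y) | y in Y].
Proof.
move=> Gg Gk Aa gaU; rewrite (image_hits Gg Gk).
apply/imsetP => -[b /setIdP[Ab gbU] /(fGhG_inj Gg Gk Aa Ab) eq_ab].
by rewrite eq_ab gbU in gaU.
Qed.

Hypothesis cardY : #|Y|.+1 = #|A|.

(* f k Y fills all of A but one point, and f k h g avoids f k Y on the points
   of A that g sends outside U. *)
Lemma miss_image_eq g1 g2 k a1 a2 : g1 \in G -> g2 \in G -> k \in G ->
    a1 \in A -> a2 \in A -> g1 a1 \notin U -> g2 a2 \notin U ->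
  f (k (h (g1 a1))) = f (k (h (g2 a2))).
Proof.
move=> Gg1 Gg2 Gk Aa1 Aa2 gaU1 gaU2.
have sub_kY : [set f (k y) | y in Y] \subset A.
  by apply/subsetP => _ /imsetP[y _ ->]; apply: imset_f.
have : #|A :\: [set f (k y) | y in Y]| <= 1.
  by rewrite cardsDS // card_translate_Y // -cardY subSnn.
by move/card_le1_eqP; apply; rewrite !inE miss_notin_translate ?imset_f.
Qed.

Lemma exists_identified_pair : #|A| < #|[set h x | x in T]| ->
  exists x y, x != y /\ forall k, k \in G -> f (k x) = f (k y).
Proof.
move=> rank_h.
have [a0 /setDP[Aa0 a0U]] : exists a0, a0 \in A :\: U.
  have card_AU : #|A :&: U| = #|Y|.
    by rewrite -(card_hits (group1 G)); apply: eq_card => a; rewrite !inE perm1.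
  by apply/set0Pn; rewrite -card_gt0 cardsD card_AU subn_gt0 -cardY.
have [_ /setDP[/imsetP[w _ ->]]] :
    exists y, y \in [set h x | x in T] :\: (h a0 |: Y).
  apply/set0Pn; rewrite setD_eq0; apply: contraTN rank_h => /subset_leq_card le_h.
  by rewrite -leqNgt (leq_trans le_h) // cardsU1 -cardY -add1n leq_add2r leq_b1.
rewrite in_setU1 negb_or => /andP[hw_a0 hwY].
have [g1 Gg1 /esym g1a0] := atransP2 trG (in_setT a0) (in_setT w).
exists (h a0), (h w); split=> [|k Gk]; first by rewrite eq_sym.
rewrite -{1}[a0]perm1 -g1a0.
by apply: miss_image_eq; rewrite ?group1 ?perm1 // [_ a0]g1a0 inE.
Qed.

End ImageHits.

Theorem theorem12 (T : finType) (S : {set {ffun T -> T}}) (G : {group {perm T}})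
    (r : nat) :
  is_semigroup S ->
  (forall g, g \in G -> [ffun x => g x] \in S) ->
  [primitive G, on [set: T] | 'P] ->
  (exists2 h, h \in S & trank h = r) ->
  (forall h, h \in S -> r <= trank h) ->
  1 < r ->
  ~ (exists2 h, h \in S & r < trank h /\ nparts_size_n_over_r h r = r.-1).
Proof.
move=> semS GS primG [f Sf <-] min_f r_gt1 [h Sh [rank_h nparts_h]].
have trG : [transitive G, on [set: T] | 'P] by case/andP: primG.
have fGhG_inj g k : g \in G -> k \in G ->
    {in [set f x | x in T] &, injective (fun a => f (k (h (g a))))}.
  move=> Gg Gk; apply: (min_rank_inj min_f
    (semS _ _ (semS _ _ (semS _ _ (semS _ _ Sf (GS g Gg)) Sh) (GS k Gk)) Sf)).
  by move=> x; rewrite !ffunE.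
pose Y := [set y in [set h x | x in T] | trank f * #|kernel_class h y| == #|T|].
have classY y : y \in Y -> trank f * #|[set x | h x == y]| = #|T|.
  by rewrite inE => /andP[_ /eqP].
have cardY : #|Y|.+1 = trank f.
  by rewrite -[#|Y|]/(nparts_size_n_over_r h (trank f)) nparts_h prednK // ltnW.
have [x [y [neq_xy fxy]]] :=
  exists_identified_pair trG fGhG_inj classY cardY rank_h.
have f_const := prim_translates_const primG neq_xy fxy.
have : trank f <= 1 by apply/card_le1_eqP => _ _ /imsetP[u _ ->] /imsetP[v _ ->].
by rewrite leqNgt r_gt1.
Qed.
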